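(* Let $G$ be a $2$-connected bipartite graph of order $n\ge 9$. Then ${\rm cc}(G)\ge 8$. Moreover, ${\rm cc}(G)=8$ if and only if $G\in\mathscr{F}_n$.
   Context: All graphs are finite and simple. A cummerbund of a graph is a longest cycle; ${\rm cc}(G)$ is the number of vertices of $G$ lying in at least one cummerbund. The family $\mathscr{F}_n=\{G_{1,n},\dots,G_{7,n}\}$ is defined as follows: start with an $8$-cycle $v_1v_2\cdots v_8v_1$, add a chord set $E_i$, and add $n-8$ new pairwise nonadjacent vertices each adjacent exactly to $v_1$ and $v_5$. The chord sets are: $E_1=\emptyset$; $E_2=\{v_1v_4\}$; $E_3=\{v_1v_4,v_1v_6\}$; $E_4=\{v_1v_4,v_2v_5\}$; $E_5=\{v_1v_4,v_5v_8\}$; $E_6=\{v_1v_4,v_1v_6,v_2v_5\}$; $E_7=\{v_1v_4,v_1v_6,v_2v_5,v_5v_8\}$. (Equivalently, $G_{i,9}$ is the order-$9$ graph with one added vertex $v$ adjacent to $v_1,v_5$, and $G_{i,n}$ is obtained from it by duplicating $v$ $n-9$ times, where duplicating $v$ means adding a new vertex with neighborhood $N(v)$.) *)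

(* Graphs: symmetric irreflexive relation e on a finType T. *)
From mathcomp Require Import all_boot.
From mathcomp Require Import boolp.
Set Implicit Arguments. Unset Strict Implicit. Unset Printing Implicit Defensive.

Section Graphs.
Variables (T : finType) (e : rel T).

Definition is_cycle (c : seq T) : Prop :=
  [/\ 3 <= size c, uniq c & cycle e c].

Definition cummerbund (c : seq T) : Prop :=
  is_cycle c /\ forall d, is_cycle d -> size d <= size c.

Definition cc : nat :=
  #|[set x : T | `[< exists c, cummerbund c /\ x \in c >]]|.

(* Connectivity of G - z (for z = None: of G itself). *)
Definition connected_minus (z : option T) : Prop :=
  forall x y, Some x != z -> Some y != z ->
    connect [rel u v | [&& Some u != z, Some v != z & e u v]] x y.

Definition two_connected : Prop :=
  2 < #|T| /\ forall z : option T, connected_minus z.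

Definition bipartite : Prop :=
  exists f : T -> bool, forall x y, e x y -> f x != f y.

End Graphs.

(* The family F_n.  Vertices of G_{i,n} are 'I_n; vertex k < 8 stands for
   v_{k+1}, vertices k >= 8 are the n-8 added vertices adjacent to v1, v5. *)
Definition chords (i : nat) : seq (nat * nat) :=
  match i with
  | 0 => [::]
  | 1 => [:: (0, 3)]
  | 2 => [:: (0, 3); (0, 5)]
  | 3 => [:: (0, 3); (1, 4)]
  | 4 => [:: (0, 3); (4, 7)]
  | 5 => [:: (0, 3); (0, 5); (1, 4)]
  | _ => [:: (0, 3); (0, 5); (1, 4); (4, 7)]
  end.

Definition fam_base (i a b : nat) : bool :=
  [|| [&& a < 8, b < 8 & b == (a + 1) %% 8],
      (a, b) \in chords i
    | (8 <= a) && ((b == 0) || (b == 4))].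

(* G_{i+1,n} for i : 'I_7 *)
Definition famG (n : nat) (i : 'I_7) : rel 'I_n :=
  fun x y => fam_base i x y || fam_base i y x.

Definition isomorphic (T U : finType) (e : rel T) (f : rel U) : Prop :=
  exists g : T -> U, bijective g /\ forall x y, e x y = f (g x) (g y).
Arguments famG n i : clear implicits.

From mathcomp Require Import all_boot.
From mathcomp Require Import boolp.
From mathcomp Require Import zify.
Set Implicit Arguments. Unset Strict Implicit. Unset Printing Implicit Defensive.

(* Let C be a cummerbund.  In a 2-connected graph every vertex off C lies on an
   ear of C: a path between two vertices a, b of C whose interior r avoids C.  The
   ear and either arc q of C between a and b form a cycle, so |r| <= |q| because C
   is longest, |r| = |q| mod 2 because G is bipartite, and if |r| = |q| then r lies
   on a cummerbund.  Hence if |C| <= 7 every vertex lies on a cummerbund and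
   cc = n >= 9, while otherwise cc >= |C| >= 8.
   If cc = 8, then |C| = 8 and no vertex off C lies on a cummerbund, so every ear
   has a single interior vertex, joined to two opposite vertices of C.  Explicit
   long cycles through a vertex w off C then show that all vertices off C are
   joined to the same opposite pair and to nothing else, and that only four of the
   eight chords of C allowed by bipartiteness can occur; up to the symmetries of C
   fixing that pair, the 16 chord patterns are the seven sets E_i.
   Conversely, a cycle of G_{i,n} alternates between the colour classes, and the
   class of v1, v3, v5, v7 has only four vertices, so cycles have length at most
   8; an 8-cycle passes through all four, hence through both neighbours of v3 and
   of v7, which leaves no room for an added vertex. *)

(** * Ears *)

Section Ears.
Variables (T : finType) (e : rel T).
Hypothesis e_sym : symmetric e.

Record ear (A : pred T) (a : T) (r : seq T) (b : T) : Prop := Ear {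
  ear_src : A a;
  ear_dst : A b;
  ear_neq : a != b;
  ear_uniq : uniq r;
  ear_inner : all (predC A) r;
  ear_path : path e a (rcons r b) }.

Lemma path_rcons_rev a r b : path e a (rcons r b) -> path e b (rcons (rev r) a).
Proof.
have -> : path e b (rcons (rev r) a) = path (fun z => e^~ z) a (rcons r b).
  by rewrite -rev_cons -(belast_rcons a r b) -{1}(last_rcons a r b) rev_path.
by rewrite (eq_path (e' := e)) // => x y; rewrite /= e_sym.
Qed.

Lemma ear_rev A a r b : ear A a r b -> ear A b (rev r) a.
Proof.
case=> Aa Ab ab ur ar pr; split; rewrite ?rev_uniq ?all_rev 1?eq_sym //.
exact: path_rcons_rev.
Qed.

Lemma eq_ear A B a r b : A =1 B -> ear A a r b -> ear B a r b.
Proof.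
move=> AB [Aa Ab ab ur ar pr]; split; rewrite -?AB //.
by rewrite -(eq_all (a1 := predC A)) // => v; rewrite /= AB.
Qed.

Lemma uniq_cat_insert (s1 s2 s3 : seq T) :
  uniq (s1 ++ s3) -> uniq s2 -> ~~ has [in s1 ++ s3] s2 -> uniq (s1 ++ s2 ++ s3).
Proof. by move=> u13 u2 d; rewrite uniq_catCA cat_uniq u2 has_sym d. Qed.

Lemma ear_reroute A a r1 y r2 b D z :
  ear A a (r1 ++ y :: r2) b -> path e y (rcons D z) -> uniq D ->
  all (predC A) D -> ~~ has [in r1 ++ y :: r2] D -> A z -> z != a ->
  ear A a (r1 ++ y :: D) z.
Proof.
case=> Aa _ _ ur ar pr pD uD aD rD Az za; split; rewrite 1?eq_sym //.
- move: ur; rewrite -!cat_rcons !cat_uniq uD andbT => /andP[-> _] /=.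
  apply: contra rD; apply: sub_has => v; rewrite -cat_rcons !mem_cat.
  by move->.
- by move: ar; rewrite !all_cat /= aD => /and3P[-> -> _].
- by move: pr; rewrite -!cat_rcons !rcons_cat !cat_path last_rcons pD => /andP[-> _].
Qed.

Lemma ear_shortcut A a r1 y s1 z s2 b D :
  ear A a (r1 ++ y :: s1 ++ z :: s2) b -> path e y (rcons D z) -> uniq D ->
  all (predC A) D -> ~~ has [in r1 ++ y :: s1 ++ z :: s2] D ->
  ear A a (r1 ++ y :: D ++ z :: s2) b.
Proof.
case=> Aa Ab ab ur ar pr pD uD aD rD; split => //.
- rewrite -cat_rcons uniq_cat_insert //.
    apply: subseq_uniq ur; rewrite -[r1 ++ _]cat_rcons subseq_cat2l.
    exact: suffix_subseq.
  apply: contra rD; apply: sub_has => v; rewrite -[r1 ++ _]cat_rcons !mem_cat !inE.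
  by case/orP=> [->|->]; rewrite ?orbT.
- by move: ar; rewrite !all_cat /= !all_cat /= aD => /and4P[-> -> _ /andP[-> ->]].
- move: pr; rewrite -!cat_rcons !(rcons_cat, cat_path) !last_rcons /= pD.
  by case/and3P=> -> _ ->.
Qed.

Lemma ear_detour A a r1 y r2 b D z :
  ear A a (r1 ++ y :: r2) b -> path e y (rcons D z) -> uniq D ->
  all (predC A) D -> ~~ has [in r1 ++ y :: r2] D -> (A z && (z != a)) || (z \in r2) ->
  exists a' r' b', ear A a' r' b' /\ {subset D <= r'}.
Proof.
move=> E pD uD aD rD /orP[/andP[Az za] | zr2].
  exists a, (r1 ++ y :: D), z; split; first exact: ear_reroute E pD uD aD rD Az za.
  by move=> v vD; rewrite mem_cat inE vD !orbT.
case/splitPr: zr2 E rD => s1 s2 E rD.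
exists a, (r1 ++ y :: D ++ z :: s2), b; split; first exact: ear_shortcut E pD uD aD rD.
by move=> v vD; rewrite mem_cat inE mem_cat vD !orbT.
Qed.

Lemma path_first_in (r : rel T) (A : pred T) x p :
  path r x p -> ~~ A x -> A (last x p) ->
  exists p1 z, [/\ A z, all (predC A) p1, path r x (rcons p1 z) & subseq (rcons p1 z) p].
Proof.
elim: p x => [|y p IH] x /=; first by move=> _ /negPf ->.
case/andP=> rxy py nAx Al; case Ay: (A y).
  by exists [::], y; split; rewrite /= ?rxy ?eqxx ?sub0seq.
have [p1 [z [Az ap1 pp1 sp1]]] := IH y py (negbT Ay) Al.
by exists (y :: p1), z; split; rewrite /= ?Ay ?rxy ?eqxx.
Qed.

Lemma fresh_vertex (s : seq T) : size s < #|T| -> exists w, w \notin s.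
Proof.
move=> sT; have /subsetPn[w _ ws] : ~~ (T \subset s).
  by apply: contraL sT => /subset_leq_card sub; rewrite -leqNgt (leq_trans sub) ?card_size.
by exists w.
Qed.

Hypothesis e_irr : irreflexive e.
Hypothesis two_conn : two_connected e.

Lemma connected_simple_path (z : option T) x y : Some x != z -> Some y != z ->
  exists p, [/\ path e x p, uniq (x :: p), last x p = y & all (fun v => Some v != z) p].
Proof.
move=> zx zy; have /connectP[p pz ->] := two_conn.2 z x y zx zy.
case/shortenP: pz => q qz uq _; exists q; split => //.
  by apply: sub_path qz => u v /and3P[].
by elim: q x qz {uq zx} => //= v q IH u /andP[/and3P[_ -> _] /IH].
Qed.

Lemma detour (S : pred T) x y t : e x y -> ~~ S x -> S t -> t != y ->
  exists p z, [/\ S z, z != y, uniq (x :: p), all (predC S) (x :: p)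
                 & path e y (rcons (x :: p) z)].
Proof.
move=> exy nSx St ty.
have xy : Some x != Some y by apply: contraTneq exy => -[->]; rewrite e_irr.
have ty' : Some t != Some y by apply: contra ty => /eqP[->].
have [q [pq uq lq qy]] := connected_simple_path xy ty'.
have [|p1 [z [Sz ap1 pp1 sp1]]] := path_first_in pq nSx; first by rewrite lq.
have zq : z \in q by apply: (mem_subseq sp1); rewrite mem_rcons mem_head.
exists p1, z; split => //.
- by apply/negP => /eqP zy; move: (allP qy z zq); rewrite zy eqxx.
- apply: subseq_uniq uq; rewrite -cat1s -[x :: q]cat1s subseq_cat2l.
  exact: subseq_trans (subseq_rcons p1 z) sp1.
- by rewrite /= nSx.
- by rewrite /= e_sym exy.
Qed.

(* A path from [x] to [a] avoiding [y] first meets [A] or [r] at some [z]; it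
   reroutes the ear, or its reverse, through [x] to [z], or shortcuts it there. *)
Lemma ear_extend A a r b y x : ear A a r b -> y \in r -> e x y -> ~~ A x ->
  exists a' r' b', ear A a' r' b' /\ x \in r'.
Proof.
move=> E yr exy nAx; case: (boolP (x \in r)) => xr; first by exists a, r, b.
have nAy : ~~ A y := allP (ear_inner E) y yr.
have ay : a != y by apply: contraNneq nAy => <-; exact: ear_src E.
have nSx : ~~ [predU A & r] x by rewrite !inE negb_or nAx.
have Sa : [predU A & r] a by apply/orP; left; exact: ear_src E.
have [p [z [Sz zy uD aSD pD]]] := detour exy nSx Sa ay.
have aD : all (predC A) (x :: p).
  by apply: sub_all aSD => v /=; rewrite negb_or => /andP[].
have rD : ~~ has [in r] (x :: p).
  by rewrite -all_predC; apply: sub_all aSD => v /=; rewrite negb_or => /andP[].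
have {}Sz : A z || (z \in r) := Sz.
suff [a' [r' [b' [E' sub]]]] : exists a' r' b', ear A a' r' b' /\ {subset x :: p <= r'}.
  by exists a', r', b'; split => //; apply: sub; rewrite mem_head.
case/splitPr: yr E rD Sz => r1 r2 E rD Sz.
have Er := ear_rev E; rewrite rev_cat rev_cons cat_rcons in Er.
have rDr : ~~ has [in rev r2 ++ y :: rev r1] (x :: p).
  by rewrite -cat_rcons -rev_cons -rev_cat (eq_has (mem_rev _)).
case/orP: Sz => [Az | ].
  case: (eqVneq z a) => [za | za]; last by apply: ear_detour E pD uD aD rD _; rewrite Az za.
  by apply: ear_detour Er pD uD aD rDr _; rewrite Az za (ear_neq E).
rewrite mem_cat inE (negbTE zy) /= => /orP[zr1 | zr2].
- by apply: ear_detour Er pD uD aD rDr _; rewrite mem_rev zr1 orbT.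
- by apply: ear_detour E pD uD aD rD _; rewrite zr2 orbT.
Qed.

Lemma ear_start (A : pred T) x y b0 : A y -> A b0 -> b0 != y -> e x y -> ~~ A x ->
  exists a r b, ear A a r b /\ x \in r.
Proof.
move=> Ay Ab0 b0y exy nAx; have [p [z [Az zy uD aD pD]]] := detour exy nAx Ab0 b0y.
by exists y, (x :: p), z; split; [split; rewrite // eq_sym | exact: mem_head].
Qed.

Lemma ear_through (A : pred T) a0 b0 x : A a0 -> A b0 -> a0 != b0 -> ~~ A x ->
  exists a r b, ear A a r b /\ x \in r.
Proof.
move=> Aa0 Ab0 ab0.
have [p [px _ lp _]] := connected_simple_path (z := None) (x := x) (y := a0) isT isT.
have : A (last x p) by rewrite lp.
elim: p x px {lp} => [|y p IH] x /=; first by move=> _ ->.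
case/andP=> exy py Ap nAx; case Ay: (A y); last first.
  have [a [r [b [E yr]]]] := IH y py Ap (negbT Ay).
  exact: ear_extend E yr exy nAx.
case: (eqVneq a0 y) => [a0y | a0y]; last exact: ear_start Ay Aa0 a0y exy nAx.
by apply: ear_start Ay Ab0 _ exy nAx; rewrite -a0y eq_sym.
Qed.

Lemma cycle_exists : exists c, is_cycle e c.
Proof.
have [u _] := @fresh_vertex [::] (ltnW (ltnW two_conn.1)).
have [v uv] := @fresh_vertex [:: u] (ltnW two_conn.1).
rewrite mem_seq1 eq_sym in uv.
have [[|y p] [pp _ lp _]] := connected_simple_path (z := None) (x := u) (y := v) isT isT.
  by rewrite /= in lp; rewrite lp eqxx in uv.
case/andP: pp => euy _.
have uy : u != y by apply: contraTneq euy => ->; rewrite e_irr.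
have [w uyw] := @fresh_vertex [:: u; y] two_conn.1.
have [a [r [b [[Aa Ab ab ur ar pr] wr]]]] := ear_through (A := mem [:: u; y]) (mem_head _ _)
  (mem_last _ _) uy uyw.
have eab : e b a.
  by move: Aa Ab ab; rewrite !inE => /orP[]/eqP-> /orP[]/eqP->; rewrite ?eqxx // e_sym.
exists (a :: rcons r b); split.
- by rewrite /= size_rcons; case: r wr {ur ar pr}.
- rewrite /= rcons_uniq mem_rcons inE negb_or ab ur.
  by rewrite !(contraTN (allP ar _)) //= negbK.
- by rewrite /= rcons_path pr last_rcons eab.
Qed.

End Ears.

(** * Cummerbunds *)

Lemma is_cycle_map (T U : finType) (e : rel T) (e' : rel U) (h : T -> U) c :
  injective h -> (forall x y, e x y = e' (h x) (h y)) -> is_cycle e c -> is_cycle e' (map h c).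
Proof.
move=> h_inj h_e [c3 uc c_cyc]; split; rewrite ?size_map ?map_inj_uniq //.
by rewrite cycle_map (eq_cycle (e' := e)) // => x y; rewrite /= h_e.
Qed.

Section Cummerbunds.
Variables (T : finType) (e : rel T).

Definition on_cummerbund (x : T) : Prop := exists c, cummerbund e c /\ x \in c.

Lemma cummerbund_exists : (exists c, is_cycle e c) -> exists c, cummerbund e c.
Proof.
case=> c0 c0_cycle; pose P k := `[< exists c, is_cycle e c /\ size c = k >].
have P_c0 : exists k, P k by exists (size c0); apply/asboolP; exists c0.
have P_le k : P k -> k <= #|T|.
  by move=> /asboolP[c [[_ uc _] <-]]; rewrite -(card_uniqP uc) max_card.
case: (ex_maxnP P_c0 P_le) => k /asboolP[c [c_cycle <-]] c_max.
by exists c; split => // d d_cycle; apply/c_max/asboolP; exists d.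
Qed.

Lemma cummerbund_rot n c : cummerbund e c -> cummerbund e (rot n c).
Proof.
case=> -[c3 uc cc_] cmax; split; first by split; rewrite ?size_rot ?rot_uniq ?rot_cycle.
by move=> d /cmax; rewrite size_rot.
Qed.

Lemma cc_ge_uniq s : uniq s -> (forall x, x \in s -> on_cummerbund x) -> size s <= cc e.
Proof.
move=> us s_on; rewrite -(card_uniqP us) /cc; apply/subset_leq_card/subsetP => x xs.
by rewrite inE; apply/asboolP/s_on.
Qed.

Lemma size_cummerbund_le_cc c : cummerbund e c -> size c <= cc e.
Proof. by move=> c_cb; apply: cc_ge_uniq => [|x xc]; [case: c_cb => -[] | exists c]. Qed.

Lemma size_cummerbund_lt_cc c x :
  cummerbund e c -> x \notin c -> on_cummerbund x -> size c < cc e.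
Proof.
move=> c_cb xc x_on; apply: (@cc_ge_uniq (x :: c)) => [|y].
  by case: c_cb => -[_ uc _] _; rewrite /= xc.
by rewrite inE => /predU1P[-> // | yc]; exists c.
Qed.

Lemma cc_all_on : (forall x, on_cummerbund x) -> cc e = #|T|.
Proof.
move=> all_on; apply/eqP; rewrite eqn_leq max_card cardE.
by apply: cc_ge_uniq => [|x _]; rewrite ?enum_uniq.
Qed.

Lemma isomorphic_sym (U : finType) (e' : rel U) : isomorphic e e' -> isomorphic e' e.
Proof.
case=> g [[g' gK g'K] g_mono]; exists g'; split; first by exists g.
by move=> x y; rewrite g_mono !g'K.
Qed.

Lemma cc_iso_le (U : finType) (e' : rel U) : isomorphic e e' -> cc e <= cc e'.
Proof.
case=> g [[g' gK g'K] g_mono]; have g_inj := can_inj gK.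
have g'_e x y : e' x y = e (g' x) (g' y) by rewrite g_mono !g'K.
have g_cb c : cummerbund e c -> cummerbund e' (map g c).
  case=> c_cyc cmax; split; first exact: is_cycle_map.
  move=> d /(is_cycle_map (can_inj g'K) g'_e) /cmax.
  by rewrite !size_map.
rewrite /cc -(card_imset _ g_inj); apply/subset_leq_card/subsetP => y /imsetP[x].
rewrite inE => /asboolP[c [c_cb xc]] ->; rewrite inE; apply/asboolP.
by exists (map g c); split; [exact: g_cb | exact: map_f].
Qed.

End Cummerbunds.

Lemma cc_iso (T U : finType) (e : rel T) (e' : rel U) : isomorphic e e' -> cc e = cc e'.
Proof.
by move=> iso; apply/anti_leq; rewrite !cc_iso_le //; exact: isomorphic_sym.
Qed.

(** * Properly 2-coloured cycles and arcs of a cummerbund *)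

Section Colouring.
Variables (T : eqType) (e : rel T) (f : T -> bool).
Hypothesis f_e : forall x y, e x y -> f x != f y.

Lemma colour_step x y : e x y -> f y = ~~ f x.
Proof. by move/f_e; case: (f x); case: (f y). Qed.

Lemma path_colour x p : path e x p -> f (last x p) = f x (+) odd (size p).
Proof.
elim: p x => [|y p IH] x /=; first by rewrite addbF.
by case/andP=> /colour_step fy /IH ->; rewrite fy; case: (f x); case: (odd _).
Qed.

Lemma nth_path_colour x p i : path e x p -> i <= size p -> f (nth x (x :: p) i) = f x (+) odd i.
Proof.
elim: p x i => [|y p IH] x [|i] //=; rewrite ?addbF // => /andP[/colour_step fy py] ip.
by rewrite (set_nth_default y) // (IH y i py ip) fy; case: (f x); case: (odd i).
Qed.

(* [next c] maps the vertices of [c] of colour [true] injectively to vertices of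
   colour [false]. *)
Lemma count_colour_cycle_le c : uniq c -> cycle e c -> count f c <= count (predC f) c.
Proof.
move=> uc cc_; rewrite -!size_filter -(size_map (next c)).
apply: uniq_leq_size => [|y /mapP[x]].
  by rewrite map_inj_uniq ?filter_uniq //; apply: can_inj (prev_next uc).
rewrite mem_filter => /andP[fx xc] ->; rewrite mem_filter mem_next xc andbT /=.
by rewrite (colour_step (next_cycle cc_ xc)) fx.
Qed.

End Colouring.

Lemma cycle_colour_balanced (T : eqType) (e : rel T) (f : T -> bool) c :
  (forall x y, e x y -> f x != f y) -> uniq c -> cycle e c -> count f c = count (predC f) c.
Proof.
move=> f_e uc cc_; apply/anti_leq; rewrite (count_colour_cycle_le f_e) //=.
have f_e' x y : e x y -> ~~ f x != ~~ f y by move/f_e; case: (f x); case: (f y).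
apply: leq_trans (count_colour_cycle_le f_e' uc cc_) _.
by rewrite (@eq_count _ _ f) // => x; rewrite /= negbK.
Qed.

Lemma prev_neq_next (T : eqType) (c : seq T) x :
  uniq c -> 3 <= size c -> x \in c -> prev c x != next c x.
Proof.
move=> uc c3 /rot_to[i s cE]; apply/negP => /eqP pn.
have := next_prev uc x; rewrite pn -!(next_rot i uc) cE.
have : uniq (x :: s) by rewrite -cE rot_uniq.
have : 2 <= size s by rewrite -ltnS -[(size s).+1]/(size (x :: s)) -cE size_rot.
case: s {cE} => [|y [|z s]] //= _; rewrite !inE => /andP[/norP[xy /norP[xz _]] _].
by rewrite /next /= eqxx eq_sym (negbTE xy) eqxx => /eqP; rewrite eq_sym (negbTE xz).
Qed.

Lemma cycle_neighbours (T : eqType) (r : rel T) (c : seq T) x a b :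
  uniq c -> 3 <= size c -> cycle r c -> x \in c ->
  (forall y, r x y || r y x -> (y == a) || (y == b)) -> (a \in c) && (b \in c).
Proof.
move=> uc c3 cc_ xc nbr.
have /nbr nx : r x (next c x) || r (next c x) x by rewrite next_cycle.
have /nbr px : r x (prev c x) || r (prev c x) x by rewrite prev_cycle ?orbT.
have := prev_neq_next uc c3 xc; have := mem_next c x; have := mem_prev c x; rewrite xc.
by case/orP: nx => /eqP->; case/orP: px => /eqP-> pc nc; rewrite ?pc ?nc ?eqxx.
Qed.

Section Arcs.
Variables (T : finType) (e : rel T) (f : T -> bool).
Hypotheses (e_sym : symmetric e) (f_e : forall x y, e x y -> f x != f y).

Lemma cycle_cat_cons a s b t :
  cycle e (a :: s ++ b :: t) = path e a (rcons s b) && path e b (rcons t a).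
Proof. by rewrite /= rcons_cat cat_path /= [path e a (rcons _ _)]rcons_path andbA. Qed.

Lemma ear_cycle a q1 b q2 r :
  uniq (a :: q1 ++ b :: q2) -> cycle e (a :: q1 ++ b :: q2) ->
  ear e (mem (a :: q1 ++ b :: q2)) a r b -> r != [::] -> is_cycle e (a :: r ++ b :: q2).
Proof.
move=> uC cC [_ _ _ ur ar pr] r0; split.
- by case: r r0 {ur ar pr} => //= *; rewrite size_cat /= !addnS.
- rewrite -cat1s uniq_cat_insert //.
    by apply: subseq_uniq uC; rewrite -cat1s subseq_cat2l suffix_subseq.
  rewrite -all_predC; apply: sub_all ar => v /=; apply: contra.
  by rewrite !(inE, mem_cat) => /or3P[->|->|->]; rewrite ?orbT.
- by rewrite cycle_cat_cons pr; move: cC; rewrite cycle_cat_cons => /andP[].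
Qed.

(* [r] is the interior of an ear of a cummerbund and [q] one of the two arcs of
   the cummerbund between the ends of the ear. *)
Definition arc_bound (r q : seq T) : Prop :=
  [/\ size r <= size q, size r = size q %[mod 2]
    & size r = size q -> {in r, forall y, on_cummerbund e y}].

(* Replacing [q1] by [r] gives a cycle, hence no longer than the cummerbund and a
   cummerbund itself if equally long; [q1] and [r] both join [a] to [b], so their
   lengths have equal parity. *)
Lemma ear_arc a q1 b q2 r :
  cummerbund e (a :: q1 ++ b :: q2) -> ear e (mem (a :: q1 ++ b :: q2)) a r b -> r != [::] ->
  arc_bound r q1.
Proof.
case=> -[_ uC cC] Cmax E r0; have D := ear_cycle uC cC E r0.
have sizeD : size (a :: r ++ b :: q2) = size r + size q2 + 2 by rewrite /= size_cat /=; lia.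
have sizeC : size (a :: q1 ++ b :: q2) = size q1 + size q2 + 2 by rewrite /= size_cat /=; lia.
split.
- by have := Cmax _ D; rewrite sizeD sizeC leq_add2r leq_add2r.
- rewrite !modn2; move: cC; rewrite cycle_cat_cons => /andP[pq1 _].
  have := path_colour f_e pq1; have := path_colour f_e (ear_path E).
  rewrite !last_rcons !size_rcons /= => ->.
  by case: (f a); case: (odd (size r)); case: (odd (size q1)).
move=> rq y yr; exists (a :: r ++ b :: q2); split; last by rewrite inE mem_cat yr orbT.
by split=> // d /Cmax; rewrite sizeD sizeC rq.
Qed.

Lemma ear_arcs c a r b : cummerbund e c -> ear e (mem c) a r b -> r != [::] ->
  exists q1 q2, [/\ rot (index a c) c = a :: q1 ++ b :: q2, arc_bound r q1 & arc_bound r q2].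
Proof.
move=> Cc E r0.
have [q cE] : exists q, rot (index a c) c = a :: q by eexists; exact: rot_index (ear_src E).
have bq : b \in q.
  by have := ear_dst E; rewrite /= -(mem_rot (index a c)) cE inE eq_sym (negbTE (ear_neq E)).
case/splitPr: bq cE => q1 q2 cE.
have C1 : cummerbund e (a :: q1 ++ b :: q2) by rewrite -cE; apply: cummerbund_rot.
have E1 : ear e (mem (a :: q1 ++ b :: q2)) a r b by apply: eq_ear E => v /=; rewrite -cE mem_rot.
have rotC : rot (size q1).+1 (a :: q1 ++ b :: q2) = b :: q2 ++ a :: q1.
  by rewrite -cat1s catA (rot_size_cat ([:: a] ++ q1)).
have C2 : cummerbund e (b :: q2 ++ a :: q1) by rewrite -rotC; apply: cummerbund_rot.
have E2 : ear e (mem (b :: q2 ++ a :: q1)) b (rev r) a.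
  by apply: eq_ear (ear_rev e_sym E1) => v /=; rewrite -rotC mem_rot.
have [] := ear_arc C2 E2; first by rewrite -size_eq0 size_rev size_eq0.
rewrite size_rev => le2 mod2 cov2; exists q1, q2; split => //; first exact: ear_arc C1 E1 r0.
by split=> // /cov2 cov y yr; apply: cov; rewrite mem_rev.
Qed.

End Arcs.

Section CummerbundBounds.
Variables (T : finType) (e : rel T) (f : T -> bool).
Hypotheses (e_sym : symmetric e) (e_irr : irreflexive e) (two_conn : two_connected e).
Hypotheses (f_e : forall x y, e x y -> f x != f y) (n9 : 9 <= #|T|).

Lemma ear_through_cycle c x :
  is_cycle e c -> x \notin c -> exists a r b, ear e (mem c) a r b /\ x \in r.
Proof.
case: c => [|a0 [|b0 c]] [//= _ uc _] xc.
apply: (ear_through e_sym e_irr two_conn (A := mem (a0 :: b0 :: c)) (b0 := b0)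
          (mem_head _ _) _ _ xc).
  by rewrite !inE eqxx orbT.
by move: uc; rewrite /= inE negb_or => /andP[/andP[]].
Qed.

Lemma cummerbund_two_connected : exists c, cummerbund e c.
Proof. exact/cummerbund_exists/(cycle_exists e_sym e_irr two_conn). Qed.

Lemma size_arcs (c q1 q2 : seq T) (a b : T) :
  rot (index a c) c = a :: q1 ++ b :: q2 -> size c = size q1 + size q2 + 2.
Proof. by rewrite -(size_rot (index a c) c) => ->; rewrite /= size_cat /=; lia. Qed.

Lemma short_cummerbund_covers c : cummerbund e c -> size c <= 7 -> forall x, on_cummerbund e x.
Proof.
move=> Cc c7 x; case: (boolP (x \in c)) => xc; first by exists c.
have [a [r [b [E xr]]]] := ear_through_cycle (proj1 Cc) xc.
have r0 : r != [::] by case: r xr {E}.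
have [q1 [q2 [/size_arcs size_c [le1 m1 cov1] [le2 m2 cov2]]]] := ear_arcs e_sym f_e Cc E r0.
have r1 : 0 < size r by rewrite lt0n size_eq0.
suff [/cov1 | /cov2] : size r = size q1 \/ size r = size q2; [by apply | by apply | lia].
Qed.

Lemma cc_ge8 : 8 <= cc e.
Proof.
have [c Cc] := cummerbund_two_connected.
case: (leqP 8 (size c)) => [c8 | /short_cummerbund_covers cov].
  exact: leq_trans c8 (size_cummerbund_le_cc Cc).
by rewrite cc_all_on ?(ltnW n9) // => x; apply: cov.
Qed.

Hypothesis cc8 : cc e = 8.

Lemma cc8_cummerbund c :
  cummerbund e c -> size c = 8 /\ forall x, x \notin c -> ~ on_cummerbund e x.
Proof.
move=> Cc; have c8 : 7 < size c.
  rewrite ltnNge; apply/negP => /(short_cummerbund_covers Cc) /cc_all_on.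
  by rewrite cc8 => n8; move: n9; rewrite -n8.
split; first by apply/eqP; rewrite eqn_leq c8 -cc8 size_cummerbund_le_cc.
by move=> x xc /(size_cummerbund_lt_cc Cc xc); rewrite cc8 ltnNge c8.
Qed.

(* [nth a (rot (index a c) c) 4] is the vertex of [c] opposite to [a]. *)
Lemma cc8_ear c a r b : cummerbund e c -> ear e (mem c) a r b -> r != [::] ->
  size r = 1 /\ nth a (rot (index a c) c) 4 = b.
Proof.
move=> Cc E r0; have [c8 out] := cc8_cummerbund Cc.
have [q1 [q2 [cE [le1 m1 cov1] [le2 m2 cov2]]]] := ear_arcs e_sym f_e Cc E r0.
have size_c := size_arcs cE.
have r1 : 0 < size r by rewrite lt0n size_eq0.
have /hasP[y yr _] : has predT r by rewrite has_predT.
have yc : y \notin c := allP (ear_inner E) y yr.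
have ne1 : size r != size q1 by apply/eqP => /cov1 /(_ y yr); apply: out.
have ne2 : size r != size q2 by apply/eqP => /cov2 /(_ y yr); apply: out.
have [-> q13] : size r = 1 /\ size q1 = 3 by lia.
by rewrite cE /= nth_cat q13.
Qed.

Lemma cc8_labelling : exists v0 v1 v2 v3 v4 v5 v6 v7 w,
  [/\ cummerbund e [:: v0; v1; v2; v3; v4; v5; v6; v7],
       w \notin [:: v0; v1; v2; v3; v4; v5; v6; v7], e w v0 & e w v4].
Proof.
have [c Cc] := cummerbund_two_connected; have [c8 _] := cc8_cummerbund Cc.
have [w wc] : exists w, w \notin c by apply: fresh_vertex; rewrite c8.
have [a [r [b [E wr]]]] := ear_through_cycle (proj1 Cc) wc.
have r0 : r != [::] by case: r wr {E}.
have [r1 bE] := cc8_ear Cc E r0.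
case: r r0 r1 wr E => [|y []] // _ _; rewrite inE => /eqP <- E.
have /= /and3P[aw wb _] := ear_path E.
have := rot_index (ear_src E); have := cummerbund_rot (index a c) Cc.
have : w \notin rot (index a c) c by rewrite mem_rot.
have : size (rot (index a c) c) = 8 by rewrite size_rot.
move: bE; move: (rot (index a c) c) => d.
case: d => [|v0 [|v1 [|v2 [|v3 [|v4 [|v5 [|v6 [|v7 []]]]]]]]] //= -> _ wd Cd [v0a _]; subst v0.
by exists a, v1, v2, v3, b, v5, v6, v7, w; split; rewrite // e_sym.
Qed.

End CummerbundBounds.

(** * The graphs G_{i,n} *)

Definition fam_adj (i a b : nat) : bool := fam_base i a b || fam_base i b a.

Lemma fam_adj_sym i : symmetric (fam_adj i).
Proof. by move=> a b; rewrite /fam_adj orbC. Qed.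

Lemma chords_lt8 i a b : (a, b) \in chords i -> (a < 8) && (b < 8).
Proof.
have : all (fun p : nat * nat => (p.1 < 8) && (p.2 < 8)) (chords i).
  by case: i => [|[|[|[|[|[|i]]]]]].
by move/allP/(_ (a, b)).
Qed.

Lemma fam_adj_added i a b : 7 < a -> fam_adj i a b = (b == 0) || (b == 4).
Proof.
move=> a8; have a_lt8 : (a < 8) = false by rewrite ltnNge a8.
have ab : ((a, b) \in chords i) = false.
  by apply/negbTE; apply: contraFN a_lt8 => /chords_lt8/andP[].
have ba : ((b, a) \in chords i) = false.
  by apply/negbTE; apply: contraFN a_lt8 => /chords_lt8/andP[].
rewrite /fam_adj /fam_base a_lt8 ab ba a8 andbF /=.
have -> : (a == 0) || (a == 4) = false by case: a a8 {a_lt8 ab ba} => [|[|[|[|[|a]]]]].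
by rewrite andbF orbF.
Qed.

Lemma fam_adj_min i a b : fam_adj i a b = fam_adj i (minn a 8) (minn b 8).
Proof.
case: (ltnP a 8) => a8; case: (ltnP b 8) => b8 //.
- by rewrite !(fam_adj_sym i a) !fam_adj_added.
- by rewrite !fam_adj_added.
- by rewrite !fam_adj_added //; case: b b8 => [|[|[|[|[|b]]]]].
Qed.

Definition fam_colour (a : nat) : bool := odd a || (7 < a).

Lemma fam_adj_colour i a b : fam_adj i a b -> fam_colour a != fam_colour b.
Proof.
rewrite fam_adj_min /fam_colour.
case: (ltnP a 8) => a8; case: (ltnP b 8) => b8; rewrite ?a8 ?b8 ?orbT.
- by case: i => [|[|[|[|[|[|i]]]]]]; case: a a8 => [|[|[|[|[|[|[|[|a]]]]]]]] //;
    case: b b8 => [|[|[|[|[|[|[|[|b]]]]]]]].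
- by case: i => [|[|[|[|[|[|i]]]]]]; case: a a8 => [|[|[|[|[|[|[|[|a]]]]]]]].
- by case: i => [|[|[|[|[|[|i]]]]]]; case: b b8 => [|[|[|[|[|[|[|[|b]]]]]]]].
- by case: i => [|[|[|[|[|[|i]]]]]].
Qed.

Lemma fam_adj_2_6 i y :
  fam_adj i y 2 = (y == 1) || (y == 3) /\ fam_adj i y 6 = (y == 5) || (y == 7).
Proof.
rewrite !(fam_adj_min i y); case: (ltnP y 8) => y8.
  by case: i => [|[|[|[|[|[|i]]]]]]; case: y y8 => [|[|[|[|[|[|[|[|y]]]]]]]].
by case: i => [|[|[|[|[|[|i]]]]]]; case: y y8 => [|[|[|[|[|[|[|[|y]]]]]]]].
Qed.

Lemma fam_colour_even a : ~~ fam_colour a -> a \in [:: 0; 2; 4; 6].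
Proof. by rewrite /fam_colour negb_or; case: a => [|[|[|[|[|[|[|[|a]]]]]]]] //; rewrite andbF. Qed.

Lemma fam_cycle_balanced i s : uniq s -> cycle (fam_adj i) s ->
  count fam_colour s = count (predC fam_colour) s.
Proof. exact: cycle_colour_balanced (@fam_adj_colour i). Qed.

(* A cycle has as many vertices of each colour, and the even colour class is
   [0; 2; 4; 6].  An 8-cycle thus passes through 2 and 6, hence through their
   only neighbours 1, 3, 5, 7, which fill the odd colour class. *)
Lemma fam_cycle_le8 i s : uniq s -> cycle (fam_adj i) s -> size s <= 8.
Proof.
move=> us cs; rewrite -(count_predC fam_colour) (fam_cycle_balanced us cs).
have : size (filter (predC fam_colour) s) <= size [:: 0; 2; 4; 6].
  by apply: uniq_leq_size (filter_uniq _ us) _ => a; rewrite mem_filter => /andP[/fam_colour_even].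
by rewrite size_filter /=; lia.
Qed.

Lemma fam_cycle8 i s : uniq s -> cycle (fam_adj i) s -> size s = 8 -> all (gtn 8) s.
Proof.
move=> us cs s8; have bal := fam_cycle_balanced us cs.
have count4 : count (predC fam_colour) s = 4.
  by have := count_predC fam_colour s; rewrite bal s8; lia.
have [_ evensE] : (size (filter (predC fam_colour) s) = size [:: 0; 2; 4; 6])
                  * (filter (predC fam_colour) s =i [:: 0; 2; 4; 6]).
  apply: uniq_min_size; rewrite ?filter_uniq ?size_filter ?count4 // => a.
  by rewrite mem_filter => /andP[/fam_colour_even].
have in_s a : a \in [:: 0; 2; 4; 6] -> a \in s by rewrite -evensE mem_filter => /andP[].
have s_nbrs x a b : x \in [:: 0; 2; 4; 6] -> (forall y, fam_adj i x y -> (y == a) || (y == b)) ->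
    (a \in s) && (b \in s).
  move=> xs nbr; apply: (cycle_neighbours us _ cs (in_s x xs)); first by rewrite s8.
  by move=> y; rewrite (fam_adj_sym i y) orbb; apply: nbr.
have /andP[s1 s3] : (1 \in s) && (3 \in s).
  by apply: (s_nbrs 2) => // y; rewrite fam_adj_sym (fam_adj_2_6 i y).1.
have /andP[s5 s7] : (5 \in s) && (7 \in s).
  by apply: (s_nbrs 6) => // y; rewrite fam_adj_sym (fam_adj_2_6 i y).2.
apply/allP => a sa; rewrite /= ltnNge; apply/negP => a8.
have : size [:: a; 1; 3; 5; 7] <= size (filter fam_colour s).
  apply: uniq_leq_size => [|x]; first by case: a a8 {sa} => [|[|[|[|[|[|[|[|a]]]]]]]].
  rewrite mem_filter !inE => /orP[/eqP-> | /or4P[] /eqP->] //.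
  by rewrite sa /fam_colour a8 orbT.
by rewrite size_filter bal count4.
Qed.

Lemma cc_famG n (i : 'I_7) : 9 <= n -> cc (famG n i) = 8.
Proof.
case: n => // n n9; set C : seq 'I_n.+1 := [seq inord k | k <- iota 0 8].
have valC : map val C = iota 0 8.
  rewrite -map_comp -[RHS]map_id; apply/eq_in_map => k; rewrite mem_iota => /andP[_ k8] /=.
  by rewrite inordK //; lia.
have fam_cycle d :
    is_cycle (famG n.+1 i) d -> size d <= 8 /\ (size d = 8 -> all (gtn 8) (map val d)).
  case=> _ ud cd; rewrite -(size_map val).
  have ud' : uniq (map val d) by rewrite (map_inj_uniq val_inj).
  have cd' : cycle (fam_adj i) (map val d) by rewrite cycle_map.
  by split; [exact: fam_cycle_le8 ud' cd' | exact: fam_cycle8 ud' cd'].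
have sC : size C = 8 by rewrite size_map size_iota.
have uC : uniq C by rewrite -(map_inj_uniq val_inj) valC iota_uniq.
have CC : cummerbund (famG n.+1 i) C.
  have cC : cycle (fam_adj i) (map val C) by rewrite valC; case: (i) => [[|[|[|[|[|[|[|]]]]]]]].
  split=> [|d /fam_cycle[]]; last by rewrite sC.
  by split; rewrite ?sC // cycle_map in cC.
rewrite -sC -(card_uniqP uC); apply: eq_card => y; rewrite inE.
apply/asboolP/idP => [[d [[Dcyc Dmax] yd]] | yC]; last by exists C.
have [d8 d8_lt] := fam_cycle d Dcyc.
have sd : size d = 8 by apply/eqP; rewrite eqn_leq d8 -sC Dmax //; case: CC.
by rewrite -(mem_map val_inj) valC mem_iota /=; apply: (allP (d8_lt sd)); rewrite map_f.
Qed.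

(* A vertex [t] off [c] has [index t c = 8], and [fam_adj] treats all added
   vertices 8, 9, ... like 8. *)
Lemma famG_iso_index (T : finType) (e : rel T) (c : seq T) (i : 'I_7) :
  uniq c -> size c = 8 -> (forall s t, e s t = fam_adj i (index s c) (index t c)) ->
  isomorphic e (famG #|T| i).
Proof.
move=> uc c8 ec; set L := c ++ [seq t <- enum T | t \notin c].
have memL t : t \in L by rewrite mem_cat mem_filter mem_enum andbT orbN.
have uL : uniq L.
  rewrite cat_uniq uc filter_uniq ?enum_uniq // andbT.
  by apply/hasPn => t; rewrite mem_filter => /andP[].
have sL : size L = #|T| by rewrite -(card_uniqP uL); apply: eq_card => t; rewrite memL.
have idxL t : index t L < #|T| by rewrite -sL index_mem.
pose g t : 'I_#|T| := Ordinal (idxL t).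
have g_inj : injective g.
  by move=> s t /(congr1 val) /= st; rewrite -(nth_index s (memL s)) st nth_index.
have minL t : minn (index t L) 8 = index t c.
  rewrite index_cat; case: ifPn => tc; first by apply/minn_idPl; rewrite -c8 ltnW ?index_mem.
  by rewrite (memNindex tc) c8; apply/minn_idPr; rewrite leq_addr.
exists g; split; first by apply: inj_card_bij g_inj _; rewrite card_ord.
move=> s t; change (famG _ i (g s) (g t)) with (fam_adj i (index s L) (index t L)).
by rewrite fam_adj_min !minL; apply: ec.
Qed.

Lemma famG_iso (T : finType) (e : rel T) (x0 : T) (c : seq T) (i : 'I_7) :
  symmetric e -> uniq c -> size c = 8 ->
  (forall p q, p < 8 -> q < 8 -> e (nth x0 c p) (nth x0 c q) = fam_adj i p q) ->
  (forall u p, u \notin c -> p < 8 -> e u (nth x0 c p) = (p == 0) || (p == 4)) ->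
  (forall u v, u \notin c -> v \notin c -> e u v = false) ->
  isomorphic e (famG #|T| i).
Proof.
move=> e_sym uc c8 in_in out_in out_out.
have in_c u : u \in c -> index u c < 8 /\ nth x0 c (index u c) = u.
  by move=> uc'; rewrite -c8 index_mem nth_index.
have out_c u : u \notin c -> index u c = 8 by move=> uc'; rewrite memNindex ?c8.
apply: famG_iso_index uc c8 _ => s t.
case: (boolP (s \in c)) => sc; case: (boolP (t \in c)) => tc.
- by have [s8 sE] := in_c s sc; have [t8 tE] := in_c t tc; rewrite -{1}sE -{1}tE in_in.
- have [s8 sE] := in_c s sc.
  by rewrite (out_c t tc) -{1}sE e_sym out_in // fam_adj_sym fam_adj_added.
- by have [t8 tE] := in_c t tc; rewrite (out_c s sc) -{1}tE out_in // fam_adj_added.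
- by rewrite out_out // !out_c // fam_adj_added.
Qed.

(** * Graphs with cc = 8 *)

Definition cycle8_base (s03 s14 s47 s50 : bool) (p q : nat) : bool :=
  [|| (p < 8) && (q == (p + 1) %% 8),
      [&& p == 0, q == 3 & s03], [&& p == 1, q == 4 & s14],
      [&& p == 4, q == 7 & s47] | [&& p == 5, q == 0 & s50]].

Definition cycle8_adj s03 s14 s47 s50 p q :=
  cycle8_base s03 s14 s47 s50 p q || cycle8_base s03 s14 s47 s50 q p.

(* The symmetries of the 8-cycle fixing {0, 4}: the identity, the reflections
   p |-> -p and p |-> 4 - p, and the rotation by 4.  Up to them, each of the 16
   possible chord patterns is one of the seven E_i ([chords_relabel]). *)
Definition relabel (k p : nat) : nat :=
  match k with 0 => p | 1 => (8 - p) %% 8 | 2 => (12 - p) %% 8 | _ => (p + 4) %% 8 end.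

Definition relabels (s03 s14 s47 s50 : bool) (i k : nat) : bool :=
  [&& i < 7, perm_eq [seq relabel k p | p <- iota 0 8] (iota 0 8),
      all (fun p => (relabel k p \in [:: 0; 4]) == (p \in [:: 0; 4])) (iota 0 8) &
      all (fun p => all (fun q =>
             cycle8_adj s03 s14 s47 s50 (relabel k p) (relabel k q) == fam_adj i p q)
           (iota 0 8)) (iota 0 8)].

Lemma chords_relabel s03 s14 s47 s50 :
  has (fun ik => relabels s03 s14 s47 s50 ik.1 ik.2) [seq (i, k) | i <- iota 0 7, k <- iota 0 4].
Proof. by case: s03; case: s14; case: s47; case: s50. Qed.

Lemma is_cycle_of_indices (T : finType) (e : rel T) (x0 : T) (s : seq T) (l : seq nat) :
  uniq s -> all (gtn (size s)) l -> uniq l -> 3 <= size l ->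
  cycle (fun i j => e (nth x0 s i) (nth x0 s j)) l -> is_cycle e (map (nth x0 s) l).
Proof.
move=> us ls ul l3 cl; split; rewrite ?size_map ?cycle_map //.
rewrite map_inj_in_uniq // => i j /(allP ls) i_s /(allP ls) j_s /eqP.
by rewrite nth_uniq // => /eqP.
Qed.

(* [v0], ..., [v7] are the vertices v1, ..., v8 of the paper. *)
Section EightCycle.
Variables (T : finType) (e : rel T) (f : T -> bool).
Hypotheses (e_sym : symmetric e) (e_irr : irreflexive e) (two_conn : two_connected e).
Hypotheses (f_e : forall x y, e x y -> f x != f y) (n9 : 9 <= #|T|) (cc8 : cc e = 8).
Variables v0 v1 v2 v3 v4 v5 v6 v7 w : T.
Local Notation c := [:: v0; v1; v2; v3; v4; v5; v6; v7].
Hypotheses (Cc : cummerbund e c) (wc : w \notin c) (w_v0 : e w v0) (w_v4 : e w v4).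

Lemma uniq_cycle8 : uniq c. Proof. by case: Cc => -[]. Qed.

Lemma cycle8_nth_eq p q : p < 8 -> q < 8 -> (nth w c p == nth w c q) = (p == q).
Proof. by move=> p8 q8; rewrite nth_uniq // uniq_cycle8. Qed.

Lemma cycle8_edges :
  [/\ e v0 v1, e v1 v2, e v2 v3, e v3 v4 & [/\ e v4 v5, e v5 v6, e v6 v7 & e v7 v0]].
Proof. by case: Cc => -[_ _] /= /and5P[-> -> -> -> /and4P[-> -> -> /andP[-> _]]]. Qed.

Lemma cycle_through_outside_short d x : is_cycle e d -> x \in d -> x \notin c -> size d <= 7.
Proof.
move=> Dc xd xc; have [c8 out] := cc8_cummerbund e_sym e_irr two_conn f_e n9 cc8 Cc.
rewrite leqNgt; apply/negP => d8; apply: (out x xc); exists d; split => //.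
have d8' : size d = 8 by apply/eqP; rewrite eqn_leq d8 andbT -c8; case: Cc => _; apply.
by split => // d' /(proj2 Cc); rewrite c8 d8'.
Qed.

(* Cycles are encoded as lists of indices into [s]. *)
Lemma no_long_index_cycle_through_w (s : seq T) (l : seq nat) :
  uniq s -> nth w s 8 = w -> 8 \in l -> uniq l -> 8 <= size l -> all (gtn (size s)) l ->
  ~ cycle (fun i j => e (nth w s i) (nth w s j)) l.
Proof.
move=> us sw l8 ul ll ls cl.
have D := is_cycle_of_indices us ls ul (leq_trans (isT : 3 <= 8) ll) cl.
have wD : w \in map (nth w s) l by rewrite -{1}sw map_f.
by have := cycle_through_outside_short D wD wc; rewrite size_map leqNgt ll.
Qed.

Lemma ear_antipodal a r b : ear e (mem c) a r b -> r != [::] ->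
  size r = 1 /\ exists2 i, i < 4 &
    forall t, (t == a) || (t == b) = (t == nth w c i) || (t == nth w c (i + 4)).
Proof.
move=> E r0; have [-> bE] := cc8_ear e_sym e_irr two_conn f_e n9 cc8 Cc E r0; split => //.
have : index a c < 8 by rewrite index_mem; exact: ear_src E.
move: (index a c) (nth_index w (ear_src E)) bE => k <- <- k8.
exists (k %% 4); first by rewrite ltn_mod.
by move=> t; case: k k8 => [|[|[|[|[|[|[|[|k]]]]]]]] //= _; rewrite // orbC.
Qed.

Lemma ear_single a x b : a \in c -> b \in c -> a != b -> x \notin c -> e a x -> e x b ->
  ear e (mem c) a [:: x] b.
Proof. by move=> ac bc ab xc ax xb; split; rewrite //= ?xc ?ax ?xb. Qed.

Lemma outside_ear x : x \notin c -> exists a b, [/\ ear e (mem c) a [:: x] b, e a x & e x b].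
Proof.
move=> xc; have [a [r [b [E xr]]]] := ear_through_cycle e_sym e_irr two_conn (proj1 Cc) xc.
have r0 : r != [::] by case: r xr {E}.
have [r1 _] := ear_antipodal E r0.
case: r r0 r1 xr E => [|y []] // _ _; rewrite inE => /eqP <- E.
by exists a, b; have /= /and3P[] := ear_path E.
Qed.

Lemma outside_nbr_in_cycle x t : x \notin c -> e x t -> t \in c.
Proof.
move=> xc xt; apply/negPn/negP => tc.
have [a [b [E ax _]]] := outside_ear xc.
have [a' [b' [E' a't tb']]] := outside_ear tc.
have [a2 [a2c a2a ta2]] : exists a2, [/\ a2 \in c, a2 != a & e t a2].
  case: (eqVneq a' a) => [<- | a'a].
    by exists b'; split; [exact: ear_dst E' | rewrite eq_sym (ear_neq E') |].
  by exists a'; split; [exact: ear_src E' | | rewrite e_sym].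
have xt_neq : x != t by apply: contraTneq xt => ->; rewrite e_irr.
have E2 : ear e (mem c) a [:: x; t] a2.
  split; [exact: ear_src E | exact: a2c | by rewrite eq_sym | by rewrite /= inE xt_neq |
          by rewrite /= xc tc | by rewrite /= ax xt ta2].
by have [] := ear_antipodal E2 isT.
Qed.

Lemma outside_nbrs x : x \notin c ->
  exists2 i, i < 4 & forall t, e x t = (t == nth w c i) || (t == nth w c (i + 4)).
Proof.
move=> xc; have [a [b [E ax xb]]] := outside_ear xc.
have [_ [i i4 iE]] := ear_antipodal E isT.
exists i => // t; rewrite -iE.
apply/idP/idP; last by case/orP => /eqP->; rewrite // e_sym.
move=> xt; case: (eqVneq t a) => // ta; have tc := outside_nbr_in_cycle xc xt.
have at_ : a != t by rewrite eq_sym.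
have E' := ear_single (ear_src E) tc at_ xc ax xt.
have [_ <-] := cc8_ear e_sym e_irr two_conn f_e n9 cc8 Cc E' isT.
by have [_ ->] := cc8_ear e_sym e_irr two_conn f_e n9 cc8 Cc E isT; rewrite eqxx orbT.
Qed.

Local Ltac index_cycle_edges :=
  rewrite /=; repeat (apply/andP; split); by [| rewrite e_sym].

(* For i = 1, 2, 3 the attachments of [x] and [w] close a cycle through [w] of
   length 10, 8 or 10. *)
Lemma outside_attach x : x \notin c -> forall t, e x t = (t == v0) || (t == v4).
Proof.
move=> xc; have [i i4 xE] := outside_nbrs xc.
have [e01 e12 e23 e34 [e45 e56 e67 e70]] := cycle8_edges.
have xa : e x (nth w c i) by rewrite xE eqxx.
have xb : e x (nth w c (i + 4)) by rewrite xE eqxx orbT.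
case: i i4 xE xa xb => [|[|[|[|i]]]] // _ xE /= xa xb; exfalso.
all: have xw : x != w by apply: contraTneq w_v0 => <-; rewrite xE !(@cycle8_nth_eq 0).
all: have us : uniq (c ++ [:: w; x])
       by rewrite cat_uniq uniq_cycle8 /= (negbTE wc) (negbTE xc) inE eq_sym xw.
- by apply: (no_long_index_cycle_through_w (l := [:: 0; 8; 4; 3; 2; 1; 9; 5; 6; 7]) us);
    index_cycle_edges.
- by apply: (no_long_index_cycle_through_w (l := [:: 0; 8; 4; 5; 6; 9; 2; 1]) us);
    index_cycle_edges.
- by apply: (no_long_index_cycle_through_w (l := [:: 0; 8; 4; 5; 6; 7; 9; 3; 2; 1]) us);
    index_cycle_edges.
Qed.

Lemma outside_nonadjacent u v : u \notin c -> v \notin c -> e u v = false.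
Proof.
move=> uc vc; rewrite outside_attach //.
by apply/negbTE/norP; split; apply: contraNneq vc => ->; rewrite !inE eqxx ?orbT.
Qed.

(* Each of these chords would close an 8-cycle through [w]. *)
Lemma chords_absent : [/\ e v2 v5 = false, e v3 v6 = false, e v6 v1 = false & e v7 v2 = false].
Proof.
have [e01 e12 e23 e34 [e45 e56 e67 e70]] := cycle8_edges.
have us : uniq (c ++ [:: w]) by rewrite cat_uniq uniq_cycle8 /= (negbTE wc).
split; apply/negbTE/negP => chord.
- by apply: (no_long_index_cycle_through_w (l := [:: 0; 8; 4; 3; 2; 5; 6; 7]) us);
    index_cycle_edges.
- by apply: (no_long_index_cycle_through_w (l := [:: 0; 8; 4; 5; 6; 3; 2; 1]) us);
    index_cycle_edges.
- by apply: (no_long_index_cycle_through_w (l := [:: 0; 8; 4; 3; 2; 1; 6; 7]) us);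
    index_cycle_edges.
- by apply: (no_long_index_cycle_through_w (l := [:: 0; 8; 4; 5; 6; 7; 2; 1]) us);
    index_cycle_edges.
Qed.

Lemma cycle8_same_parity p q : p < 8 -> q < 8 -> odd p = odd q ->
  e (nth w c p) (nth w c q) = false.
Proof.
have [e01 e12 e23 e34 [e45 e56 e67 _]] := cycle8_edges.
have pc : path e v0 [:: v1; v2; v3; v4; v5; v6; v7] by rewrite /= e01 e12 e23 e34 e45 e56 e67.
move=> p8 q8 pq; apply/negbTE/negP => /f_e.
rewrite (set_nth_default v0 w (p8 : p < size c)) (set_nth_default v0 w (q8 : q < size c)).
by rewrite !(nth_path_colour f_e pc) // pq eqxx.
Qed.

Lemma cycle8_adjacency p q : p < 8 -> q < 8 ->
  e (nth w c p) (nth w c q) = cycle8_adj (e v0 v3) (e v1 v4) (e v4 v7) (e v5 v0) p q.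
Proof.
have [e01 e12 e23 e34 [e45 e56 e67 e70]] := cycle8_edges.
have [n25 n36 n61 n72] := chords_absent.
case: p => [|[|[|[|[|[|[|[|p]]]]]]]] // _; case: q => [|[|[|[|[|[|[|[|q]]]]]]]] // _;
  first [ by rewrite cycle8_same_parity | rewrite /cycle8_adj /cycle8_base /= ?orbF;
          by [| rewrite e_sym] ].
Qed.

Lemma cc8_isomorphic : exists i : 'I_7, isomorphic e (famG #|T| i).
Proof.
have /hasP[[i k] _ /and4P[i7 perm_k fix04 adj_k]] :=
  chords_relabel (e v0 v3) (e v1 v4) (e v4 v7) (e v5 v0).
have iota8 p : p < 8 -> p \in iota 0 8 by rewrite mem_iota.
have rel8 p : p < 8 -> relabel k p < 8.
  move=> p8; have : relabel k p \in iota 0 8 by rewrite -(perm_mem perm_k) map_f ?iota8.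
  by rewrite mem_iota.
set d := [seq nth w c (relabel k p) | p <- iota 0 8].
have perm_d : perm_eq d c.
  have cE : map (nth w c) (iota 0 8) = c by [].
  by rewrite -[X in perm_eq _ X]cE /d (map_comp (nth w c) (relabel k)) perm_map.
have nth_d p : p < 8 -> nth w d p = nth w c (relabel k p).
  by move=> p8; rewrite (nth_map 0) ?size_iota // nth_iota.
exists (Ordinal i7); apply: (famG_iso (x0 := w) (c := d) e_sym).
- by rewrite (perm_uniq perm_d) uniq_cycle8.
- by rewrite size_map size_iota.
- move=> p q p8 q8; rewrite !nth_d // cycle8_adjacency ?rel8 //.
  exact/eqP/(allP (allP adj_k _ (iota8 _ p8)) _ (iota8 _ q8)).
- move=> u p; rewrite (perm_mem perm_d) => uc p8.
  rewrite nth_d // outside_attach // (@cycle8_nth_eq _ 0) ?(@cycle8_nth_eq _ 4) ?rel8 //.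
  by have /eqP := allP fix04 p (iota8 p p8); rewrite !inE.
- by move=> u v; rewrite !(perm_mem perm_d); apply: outside_nonadjacent.
Qed.

End EightCycle.

Theorem theorem14 (T : finType) (e : rel T) (e_sym : symmetric e)
  (e_irr : irreflexive e) :
  9 <= #|T| -> two_connected e -> bipartite e ->
  8 <= cc e /\ (cc e = 8 <-> exists i : 'I_7, isomorphic e (famG #|T| i)).
Proof.
move=> n9 two_conn [f f_e].
split; first exact: cc_ge8 e_sym e_irr two_conn f_e n9.
split=> [cc8 | [i /cc_iso ->]]; last exact: cc_famG.
have [v0 [v1 [v2 [v3 [v4 [v5 [v6 [v7 [w [Cc wc w_v0 w_v4]]]]]]]]]] :=
  cc8_labelling e_sym e_irr two_conn f_e n9 cc8.
exact: (cc8_isomorphic e_sym e_irr two_conn f_e n9 cc8 Cc wc w_v0 w_v4).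
Qed.
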